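(* Let $A$ be a commutative unital ring, $B$ an $A$-algebra that is finitely generated and free as an $A$-module, and $D$ a $B$-algebra. Let $\mathrm{Der}_B(D)$ be the set of all derivations $\partial$ of $D$ for which there exist a derivation $d$ of $A$ and a derivation $\delta$ of $B$ such that the structure maps are differential maps $(A,d)\to(B,\delta)$ and $(B,\delta)\to(D,\partial)$. For $\partial\in\mathrm{Der}_B(D)$ let $\partial^W$ denote the derivation of the classical Weil descent $W(D)$ given by: the unique derivation of $W(D)$ such that $(W(D),\partial^W)$ is a differential $(A,d)$-algebra and the unit $W_D:D\to W(D)\otimes_A B$ satisfies $W_D\circ\partial=(\partial^W\otimes\delta)\circ W_D$ (for any such $d,\delta$). Then $\mathrm{Der}_B(D)$ is an $A$-submodule and a Lie subring of $\mathrm{Der}(D)$ and the map $\mathrm{Der}_B(D)\to\mathrm{Der}(W(D))$, $\partial\mapsto\partial^W$, is an $A$-module and Lie ring homomorphism. Explicitly, for $\partial_1,\partial_2\in\mathrm{Der}_B(D)$: (i) $(a_1\partial_1+a_2\partial_2)^W=a_1\partial_1^W+a_2\partial_2^W$ for all $a_1,a_2\in A$; (ii) $[\partial_1,\partial_2]^W=[\partial_1^W,\partial_2^W]$; in particular $\partial_1^W,\partial_2^W$ commute if $\partial_1,\partial_2$ commute.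
   Context: All rings and algebras are commutative and unital. Classical Weil descent: for $B$ free of finite rank over $A$ and a $B$-algebra $D$, $W(D)$ is an $A$-algebra with a $B$-algebra homomorphism $W_D:D\to W(D)\otimes_A B$ such that for every $A$-algebra $C$ and every $B$-algebra homomorphism $f:D\to C\otimes_A B$ there is a unique $A$-algebra homomorphism $g:W(D)\to C$ with $(g\otimes\mathrm{id}_B)\circ W_D=f$. For a differential $(A,d)$-algebra $(C,\eta)$, $\eta\otimes\delta$ is the unique derivation of $C\otimes_A B$ making $C\to C\otimes_AB$ and $B\to C\otimes_AB$ differential. $[\partial_1,\partial_2]=\partial_1\partial_2-\partial_2\partial_1$. Elements of $A$ act on derivations of $D$ and of $W(D)$ via the structure maps. *)

From HB Require Import structures.
From mathcomp Require Import all_boot all_order all_algebra.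
Set Implicit Arguments. Unset Strict Implicit. Unset Printing Implicit Defensive.
Import GRing.Theory.
Local Open Scope ring_scope.

Definition is_der (R : pzRingType) (f : R -> R) : Prop :=
  (forall x y, f (x + y) = f x + f y) /\ (forall x y, f (x * y) = f x * y + x * f y).

Definition fin_free (A : comNzRingType) (B : comAlgType A) : Prop :=
  exists (n : nat) (e : 'I_n -> B), forall x : B,
    exists c : 'I_n -> A, x = \sum_(i < n) c i *: e i /\
      forall c' : 'I_n -> A, x = \sum_(i < n) c' i *: e i -> c' =1 c.

(* (T, iC, iB) is the tensor product C (x)_A B of the A-algebra (C, gC) and the
   A-algebra B, characterised as the pushout (coproduct) of commutative A-algebras. *)
Definition is_tensor (A : comNzRingType) (B : comAlgType A)
  (C : comPzRingType) (gC : {rmorphism A -> C})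
  (T : comPzRingType) (iC : {rmorphism C -> T}) (iB : {rmorphism B -> T}) : Prop :=
  (forall a, iC (gC a) = iB (a%:A)) /\
  forall (S : comPzRingType) (f : {rmorphism C -> S}) (g : {rmorphism B -> S}),
    (forall a, f (gC a) = g (a%:A)) ->
    (exists h : {rmorphism T -> S},
        (forall c, h (iC c) = f c) /\ (forall b, h (iB b) = g b)) /\
    (forall h1 h2 : {rmorphism T -> S},
        (forall c, h1 (iC c) = f c) -> (forall b, h1 (iB b) = g b) ->
        (forall c, h2 (iC c) = f c) -> (forall b, h2 (iB b) = g b) -> h1 =1 h2).

(* Classical Weil descent: (W, alpha) is an A-algebra, (T, iW, iB) = W (x)_A B,
   WD : D -> W (x)_A B is a B-algebra map (D a B-algebra via phi), universal. *)
Definition is_weil_descent (A : comNzRingType) (B : comAlgType A)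
  (D : comPzRingType) (phi : {rmorphism B -> D})
  (W : comPzRingType) (alpha : {rmorphism A -> W})
  (T : comPzRingType) (iW : {rmorphism W -> T}) (iB : {rmorphism B -> T})
  (WD : {rmorphism D -> T}) : Prop :=
  is_tensor alpha iW iB /\ (forall b, WD (phi b) = iB b) /\
  forall (C : comPzRingType) (gC : {rmorphism A -> C})
         (TC : comPzRingType) (jC : {rmorphism C -> TC}) (jB : {rmorphism B -> TC}),
    is_tensor gC jC jB ->
    forall f : {rmorphism D -> TC}, (forall b, f (phi b) = jB b) ->
      (* g (x) id_B is the unique ring map h : T -> TC with h o iW = jC o g, h o iB = jB *)
      (exists g : {rmorphism W -> C}, (forall a, g (alpha a) = gC a) /\
         forall h : {rmorphism T -> TC},
           (forall w, h (iW w) = jC (g w)) -> (forall b, h (iB b) = jB b) ->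
           forall x, h (WD x) = f x) /\
      (forall g1 g2 : {rmorphism W -> C},
         (forall a, g1 (alpha a) = gC a) -> (forall a, g2 (alpha a) = gC a) ->
         (forall h : {rmorphism T -> TC},
           (forall w, h (iW w) = jC (g1 w)) -> (forall b, h (iB b) = jB b) ->
           forall x, h (WD x) = f x) ->
         (forall h : {rmorphism T -> TC},
           (forall w, h (iW w) = jC (g2 w)) -> (forall b, h (iB b) = jB b) ->
           forall x, h (WD x) = f x) ->
         g1 =1 g2).

Definition der_tower (A : comNzRingType) (B : comAlgType A)
  (D : comPzRingType) (phi : {rmorphism B -> D})
  (d : A -> A) (delta : B -> B) (dd : D -> D) : Prop :=
  [/\ is_der d, is_der delta, is_der dd,
      (forall a : A, delta (a%:A) = (d a)%:A) &
      (forall b, dd (phi b) = phi (delta b))].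

Definition in_DerB (A : comNzRingType) (B : comAlgType A)
  (D : comPzRingType) (phi : {rmorphism B -> D}) (dd : D -> D) : Prop :=
  is_der dd /\ exists (d : A -> A) (delta : B -> B), der_tower phi d delta dd.

(* eps = eta (x) delta : the derivation of T = C (x)_A B making C -> T and B -> T differential *)
Definition is_tensor_der (B : pzRingType) (C T : comPzRingType)
  (iC : C -> T) (iB : B -> T) (eta : C -> C) (delta : B -> B) (eps : T -> T) : Prop :=
  [/\ is_der eps, (forall c, eps (iC c) = iC (eta c)) &
      (forall b, eps (iB b) = iB (delta b))].

Definition weil_lift (A : comNzRingType) (B : comAlgType A)
  (D : comPzRingType) (phi : {rmorphism B -> D})
  (W : comPzRingType) (alpha : {rmorphism A -> W})
  (T : comPzRingType) (iW : {rmorphism W -> T}) (iB : {rmorphism B -> T})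
  (WD : {rmorphism D -> T}) (dd : D -> D) (ddW : W -> W) : Prop :=
  is_der ddW /\
  exists (d : A -> A) (delta : B -> B),
    [/\ der_tower phi d delta dd,
        (forall a, ddW (alpha a) = alpha (d a)) &
        exists eps : T -> T, is_tensor_der iW iB ddW delta eps /\
          (forall x, WD (dd x) = eps (WD x))].

(* A acts on derivations of a ring R through the structure map s : A -> R. *)
Definition lcomb (A R : pzRingType) (s : A -> R) (a1 a2 : A) (f1 f2 : R -> R) : R -> R :=
  fun x => s a1 * f1 x + s a2 * f2 x.

Definition lie (R : pzRingType) (f g : R -> R) : R -> R := fun x => f (g x) - g (f x).

From HB Require Import structures.
From mathcomp Require Import all_boot all_order all_algebra ring.
Set Implicit Arguments. Unset Strict Implicit. Unset Printing Implicit Defensive.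
Import GRing.Theory.
Local Open Scope ring_scope.

(* A derivation r of a commutative ring R is the same thing as the ring map
   x |-> x + r(x) eps into the dual numbers R[eps].  Since (W (x)_A B)[eps] is
   W[eps] (x)_A B, the universal property of the Weil descent, applied to
   C = W[eps], shows that a derivation of W vanishing on A is zero as soon as
   it extends to a derivation of W (x)_A B vanishing on B and on the image of D.
   The difference of two lifts of the same derivation of D is such a derivation,
   once we know that the derivations of A coming with the two lifts agree; this
   holds because W -> W (x)_A B is injective for B free of rank n >= 1, as seen
   on the model of W (x)_A B given by the W-span of the matrices of the regular
   representation of B in M_n(W). *)

Section DerivationLemmas.
Variable R : pzRingType.
Implicit Type r : R -> R.

Lemma der0 r : is_der r -> r 0 = 0.
Proof. by case=> rD _; apply: (@addrI _ (r 0)); rewrite -rD !addr0. Qed.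

Lemma derN r : is_der r -> {morph r : x / - x}.
Proof.
move=> rder x; apply/eqP; rewrite -addr_eq0 addrC -(proj1 rder).
by rewrite subrr der0.
Qed.

Lemma derB r : is_der r -> {morph r : x y / x - y}.
Proof. by move=> rder x y; rewrite (proj1 rder) derN. Qed.

Lemma der1 r : is_der r -> r 1 = 0.
Proof.
case=> _ rM; have := rM 1 1; rewrite !mul1r mulr1 => r1E.
by apply: (@addrI _ (r 1)); rewrite addr0 -r1E.
Qed.

End DerivationLemmas.

Section DerivationClosure.
Variable R : comPzRingType.
Implicit Types f g : R -> R.

Lemma is_der_zero : is_der (fun _ : R => 0).
Proof. by split=> *; rewrite ?mulr0 ?mul0r addr0. Qed.

Lemma is_derB f g : is_der f -> is_der g -> is_der (fun x => f x - g x).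
Proof. by move=> [fD fM] [gD gM]; split=> x y; rewrite ?fD ?gD ?fM ?gM; ring. Qed.

Lemma is_der_lcomb (s1 s2 : R) f g :
  is_der f -> is_der g -> is_der (fun x => s1 * f x + s2 * g x).
Proof. by move=> [fD fM] [gD gM]; split=> x y; rewrite ?fD ?gD ?fM ?gM; ring. Qed.

Lemma is_der_lie f g : is_der f -> is_der g -> is_der (lie f g).
Proof.
move=> [fD fM] [gD gM]; rewrite /lie; split=> x y; first by rewrite gD fD fD gD; ring.
by rewrite gM fM !fD !gD !fM !gM; ring.
Qed.

End DerivationClosure.

Record derivation (R : comPzRingType) :=
  Derivation { der_fun :> R -> R; der_funP : is_der der_fun }.

Definition dualnum (R : comPzRingType) : Type := (R * R)%type.
HB.instance Definition _ (R : comPzRingType) := GRing.Zmodule.on (dualnum R).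

Section DualNumbers.
Variable R : comPzRingType.
Implicit Types x y : dualnum R.

Definition dualnum_mul x y : dualnum R := (x.1 * y.1, x.1 * y.2 + x.2 * y.1).
Definition dualnum_one : dualnum R := (1, 0).

Lemma dualnumB x y : x - y = (x.1 - y.1, x.2 - y.2). Proof. by []. Qed.

Lemma dualnum_mulA : associative dualnum_mul.
Proof. by move=> [a b] [c d] [f g]; congr pair; rewrite /=; ring. Qed.
Lemma dualnum_mulC : commutative dualnum_mul.
Proof. by move=> [a b] [c d]; congr pair; rewrite /=; ring. Qed.
Lemma dualnum_mul1 : left_id dualnum_one dualnum_mul.
Proof. by move=> [a b]; congr pair; rewrite /=; ring. Qed.
Lemma dualnum_mulDl : left_distributive dualnum_mul +%R.
Proof. by move=> [a b] [c d] [f g]; congr pair; rewrite /=; ring. Qed.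

HB.instance Definition _ := GRing.Zmodule_isComPzRing.Build (dualnum R)
  dualnum_mulA dualnum_mulC dualnum_mul1 dualnum_mulDl.

Lemma dualnumM x y : x * y = (x.1 * y.1, x.1 * y.2 + x.2 * y.1). Proof. by []. Qed.

Definition dconst (c : R) : dualnum R := (c, 0).
Definition deps : dualnum R := (0, 1).

Lemma dualnumE x : x = dconst x.1 + deps * dconst x.2.
Proof. by case: x => a b; congr pair; rewrite /=; ring. Qed.

Lemma dconst_zmod : zmod_morphism dconst.
Proof. by move=> a b; rewrite dualnumB subr0. Qed.
Lemma dconst_monoid : monoid_morphism dconst.
Proof. by split=> // a b; congr pair; rewrite /=; ring. Qed.
HB.instance Definition _ := GRing.isZmodMorphism.Build R (dualnum R) dconst dconst_zmod.
HB.instance Definition _ := GRing.isMonoidMorphism.Build R (dualnum R) dconst dconst_monoid.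

Definition dlift (r : derivation R) (c : R) : dualnum R := (c, r c).

Lemma dlift_zmod r : zmod_morphism (dlift r).
Proof. by move=> a b; rewrite /dlift dualnumB /= (derB (der_funP r)). Qed.
Lemma dlift_monoid r : monoid_morphism (dlift r).
Proof.
split=> [|a b]; first by rewrite /dlift (der1 (der_funP r)).
by rewrite /dlift (proj2 (der_funP r)) dualnumM /= addrC mulrC.
Qed.
HB.instance Definition _ r :=
  GRing.isZmodMorphism.Build R (dualnum R) (dlift r) (dlift_zmod r).
HB.instance Definition _ r :=
  GRing.isMonoidMorphism.Build R (dualnum R) (dlift r) (dlift_monoid r).

End DualNumbers.
Arguments dconst {R}.
Arguments deps {R}.

Definition dmap (R S : comPzRingType) (f : {rmorphism R -> S}) (x : dualnum R) :
  dualnum S := (f x.1, f x.2).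

Lemma dmap_zmod R S f : zmod_morphism (@dmap R S f).
Proof. by move=> x y; rewrite !dualnumB /dmap !rmorphB. Qed.
Lemma dmap_monoid R S f : monoid_morphism (@dmap R S f).
Proof. by split=> [|x y]; rewrite /dmap ?rmorph1 ?rmorph0 // !dualnumM rmorphD !rmorphM. Qed.
HB.instance Definition _ R S f :=
  GRing.isZmodMorphism.Build (dualnum R) (dualnum S) (@dmap R S f) (@dmap_zmod R S f).
HB.instance Definition _ R S f :=
  GRing.isMonoidMorphism.Build (dualnum R) (dualnum S) (@dmap R S f) (@dmap_monoid R S f).

Record sqzero (S : comPzRingType) := SqZero { sqz : S; sqzK : sqz * sqz = 0 }.

Definition dext (T S : comPzRingType) (h : {rmorphism T -> S}) (z : sqzero S)
  (t : dualnum T) : S := h t.1 + sqz z * h t.2.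

Lemma dext_zmod T S h z : zmod_morphism (@dext T S h z).
Proof. by move=> x y; rewrite /dext dualnumB /= !rmorphB mulrBr addrACA opprD. Qed.
Lemma dext_monoid T S h z : monoid_morphism (@dext T S h z).
Proof.
split=> [|x y]; first by rewrite /dext rmorph1 rmorph0 mulr0 addr0.
rewrite /dext dualnumM /= rmorphD !rmorphM.
transitivity (h x.1 * h y.1 + sqz z * (h x.1 * h y.2 + h x.2 * h y.1)
              + (sqz z * sqz z) * (h x.2 * h y.2)); last by ring.
by rewrite sqzK mul0r addr0.
Qed.
HB.instance Definition _ (T S : comPzRingType) (h : {rmorphism T -> S}) z :=
  GRing.isZmodMorphism.Build (dualnum T) S (@dext T S h z) (@dext_zmod T S h z).
HB.instance Definition _ (T S : comPzRingType) (h : {rmorphism T -> S}) z :=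
  GRing.isMonoidMorphism.Build (dualnum T) S (@dext T S h z) (@dext_monoid T S h z).

Section TensorDualNumbers.
Variables (A : comNzRingType) (B : comAlgType A) (C T : comPzRingType).
Variables (gC : {rmorphism A -> C}) (iC : {rmorphism C -> T}) (iB : {rmorphism B -> T}).
Hypothesis tensorT : is_tensor gC iC iB.

Lemma tensor_dualnum : is_tensor (dconst \o gC) (dmap iC) (dconst \o iB).
Proof.
have [iCB univ] := tensorT; split=> [a|S f g fg].
  by rewrite /dmap /=; congr pair; rewrite ?iCB ?rmorph0.
have fg0 a : (f \o dconst) (gC a) = g a%:A by rewrite -fg.
have [[h0 [h0C h0B]] h0_uniq] := univ S (f \o dconst) g fg0.
have fepsK : f deps * f deps = 0.
  by rewrite -rmorphM dualnumM /= !mul0r mulr0 addr0 -[(0, 0)]/(0 : dualnum C) rmorph0.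
pose z := SqZero fepsK.
have dextC c : dext h0 z (dmap iC c) = f c.
  by rewrite /dext /= !h0C /= {3}(dualnumE c) rmorphD rmorphM.
have dextB b : dext h0 z ((dconst \o iB) b) = g b.
  by rewrite /dext /= h0B rmorph0 mulr0 addr0.
suff dext_uniq (h : {rmorphism dualnum T -> S}) :
    (forall c, h (dmap iC c) = f c) -> (forall b, h ((dconst \o iB) b) = g b) ->
    h =1 dext h0 z.
  split; first by exists (dext h0 z).
  by move=> h1 h2 h1C h1B h2C h2B t; rewrite (dext_uniq h1) ?(dext_uniq h2).
move=> hC hB t.
have hconst : h \o dconst =1 h0.
  by apply: h0_uniq => // c; rewrite /= -hC /dmap /= rmorph0.
rewrite {1}(dualnumE t) rmorphD rmorphM -!/((h \o dconst) _) !hconst.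
by rewrite /dext /= -hC /dmap /= rmorph0 rmorph1.
Qed.

Lemma tensor_dlift (r : derivation C) (rho : derivation T) :
    (forall a, r (gC a) = 0) -> (forall c, rho (iC c) = iC (r c)) ->
    (forall b, rho (iB b) = 0) ->
  forall h : {rmorphism T -> dualnum T},
    (forall c, h (iC c) = dmap iC (dlift r c)) -> (forall b, h (iB b) = dconst (iB b)) ->
  h =1 dlift rho.
Proof.
move=> r_gC rho_iC rho_iB h hC hB.
have compat a : (dmap iC \o dlift r) (gC a) = (dconst \o iB) a%:A.
  by rewrite /= /dlift /dmap /= r_gC rmorph0 (proj1 tensorT).
apply: (proj2 (proj2 tensorT _ _ _ compat)) => // [c|b].
  by rewrite /= /dlift /dmap /= rho_iC.
by rewrite /= /dlift rho_iB.
Qed.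

End TensorDualNumbers.

Section RegularRepresentation.
Variables (A : comNzRingType) (B : comAlgType A) (n : nat) (e : 'I_n -> B).
Variable coord : B -> 'I_n -> A.
Hypothesis coordE : forall x, x = \sum_i coord x i *: e i.
Hypothesis coord_unique : forall x c, x = \sum_i c i *: e i -> c =1 coord x.

Definition coordv (x : B) : 'cV[A]_n := \col_k coord x k.

Lemma coord_linear a x y k : coord (a *: x + y) k = a * coord x k + coord y k.
Proof.
rewrite -(coord_unique (c := fun i => a * coord x i + coord y i)) //.
rewrite {1}(coordE x) {1}(coordE y) scaler_sumr -big_split.
by apply: eq_bigr => i _; rewrite scalerDl scalerA.
Qed.

Lemma coordv_is_linear : linear coordv.
Proof. by move=> a x y; apply/colP => k; rewrite !mxE coord_linear. Qed.
HB.instance Definition _ :=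
  GRing.isLinear.Build A B 'cV[A]_n *:%R coordv coordv_is_linear.

Lemma coord_basis j k : coord (e j) k = (k == j)%:R.
Proof.
rewrite -(coord_unique (c := fun i => (i == j)%:R)) //.
rewrite (bigD1 j) //= eqxx scale1r big1 ?addr0 // => i /negbTE ->.
by rewrite scale0r.
Qed.

Definition lreg (b : B) : 'M[A]_n := \matrix_(k, i) coord (b * e i) k.

Lemma lreg_coordv b c : lreg b *m coordv c = coordv (b * c).
Proof.
rewrite {2}(coordE c) mulr_sumr linear_sum; apply/colP => k.
rewrite !mxE summxE; apply: eq_bigr => i _.
by rewrite -scalerAr linearZ !mxE mulrC.
Qed.

Lemma lreg_is_linear : linear lreg.
Proof.
by move=> a b c; apply/matrixP => k i; rewrite !mxE mulrDl -scalerAl coord_linear.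
Qed.
HB.instance Definition _ :=
  GRing.isLinear.Build A B 'M[A]_n *:%R lreg lreg_is_linear.

Lemma lreg_is_monoid : monoid_morphism lreg.
Proof.
split=> [|b c]; first by apply/matrixP => k i; rewrite !mxE mul1r coord_basis.
apply/matrixP => k i; have /colP/(_ k) := lreg_coordv b (c * e i).
by rewrite !mxE mulrA => <-; apply: eq_bigr => j _; rewrite !mxE.
Qed.
HB.instance Definition _ := GRing.isMonoidMorphism.Build B 'M[A]_n lreg lreg_is_monoid.

Variables (W : comPzRingType) (alpha : {rmorphism A -> W}).

Definition lregW (b : B) : 'M[W]_n := map_mx alpha (lreg b).
HB.instance Definition _ := GRing.RMorphism.copy lregW (map_mx alpha \o lreg).

Lemma lregWM b c : lregW (b * c) = lregW b *m lregW c.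
Proof. exact: rmorphM. Qed.

Lemma lregWZ a b : lregW (a *: b) = alpha a *: lregW b.
Proof. by rewrite /lregW linearZ map_mxZ. Qed.

Definition span_comb (u : 'I_n -> W) : 'M[W]_n := \sum_i u i *: lregW (e i).

Lemma lregW_span b : lregW b = span_comb (fun i => alpha (coord b i)).
Proof. by rewrite {1}(coordE b) rmorph_sum; apply: eq_bigr => i _; rewrite -lregWZ. Qed.

Definition coordv1W : 'cV[W]_n := map_mx alpha (coordv 1).

Lemma span_comb_coord u k : (span_comb u *m coordv1W) k ord0 = u k.
Proof.
rewrite mulmx_suml summxE (bigD1 k) //= big1 ?addr0 => [|i /negbTE ik];
  rewrite -scalemxAl -map_mxM lreg_coordv mulr1 !mxE coord_basis;
  rewrite ?eqxx ?rmorph1 ?mulr1 //.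
by rewrite eq_sym ik rmorph0 mulr0.
Qed.

(* Membership in the W-span of the [lregW (e i)] is decidable because, thanks to
   [span_comb_coord], the coefficients are read off by multiplying with [coordv1W]. *)
Definition in_span (X : 'M[W]_n) : bool :=
  X == span_comb (fun i => (X *m coordv1W) i ord0).

Lemma in_spanP X : reflect (exists u, X = span_comb u) (in_span X).
Proof.
apply: (iffP eqP) => [->|[u ->]]; first by eexists.
by apply: eq_bigr => i _; rewrite span_comb_coord.
Qed.

Lemma in_span_submod : submod_closed in_span.
Proof.
split=> [|a X Y /in_spanP[u ->] /in_spanP[w ->]]; apply/in_spanP.
  by exists (fun=> 0); rewrite /span_comb big1 // => i _; rewrite scale0r.
exists (fun i => a * u i + w i); rewrite /span_comb scaler_sumr -big_split.
by apply: eq_bigr => i _; rewrite scalerDl scalerA.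
Qed.
HB.instance Definition _ :=
  GRing.isSubmodClosed.Build W 'M[W]_n in_span in_span_submod.

Lemma lregW_in_span b : in_span (lregW b).
Proof. by apply/in_spanP; exists (fun i => alpha (coord b i)); apply: lregW_span. Qed.

Lemma lregW_span_comm b X : in_span X -> lregW b * X = X * lregW b.
Proof.
move=> /in_spanP[u ->]; rewrite mulr_sumr mulr_suml; apply: eq_bigr => i _.
by rewrite -[_ * _]scalemxAr -[_ * lregW b]scalemxAl -!lregWM mulrC.
Qed.

Lemma in_span_comm X Y : in_span X -> in_span Y -> X * Y = Y * X.
Proof.
move=> /in_spanP[u ->] spanY; rewrite mulr_sumr mulr_suml; apply: eq_bigr => i _.
by rewrite -[_ * Y]scalemxAl -[Y * _]scalemxAr; congr (_ *: _); apply: lregW_span_comm.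
Qed.

Lemma in_spanM X Y : in_span X -> in_span Y -> in_span (X * Y).
Proof.
move=> /in_spanP[u ->] /in_spanP[w ->]; rewrite mulr_suml; apply: rpred_sum => i _.
rewrite -[_ * _]scalemxAl mulmx_sumr; apply/rpredZ/rpred_sum => j _.
by rewrite -scalemxAr -lregWM; apply/rpredZ/lregW_in_span.
Qed.

Lemma in_span_subring : subring_closed in_span.
Proof.
split; [rewrite -(rmorph1 lregW); exact: lregW_in_span | exact: rpredB | exact: in_spanM].
Qed.

Record spanmx := SpanMx { spanmx_val : 'M[W]_n; _ : in_span spanmx_val }.
HB.instance Definition _ := [isSub for spanmx_val].
HB.instance Definition _ := [Choice of spanmx by <:].
HB.instance Definition _ := GRing.SubChoice_isSubPzRing.Build _ _ spanmx in_span_subring.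

Lemma spanmx_mulC : commutative (@GRing.mul spanmx).
Proof. by move=> [X spanX] [Y spanY]; apply: val_inj; apply: in_span_comm. Qed.
HB.instance Definition _ := GRing.PzRing_hasCommutativeMul.Build spanmx spanmx_mulC.

Lemma scalar_in_span w : in_span w%:M.
Proof. by rewrite -scalemx1 -[1%:M](rmorph1 lregW); apply/rpredZ/lregW_in_span. Qed.

Definition scalar_spanmx (w : W) : spanmx := SpanMx (scalar_in_span w).
Definition reg_spanmx (b : B) : spanmx := SpanMx (lregW_in_span b).

Lemma scalar_spanmx_zmod : zmod_morphism scalar_spanmx.
Proof. by move=> w w'; apply: val_inj; rewrite /= raddfB. Qed.
Lemma scalar_spanmx_monoid : monoid_morphism scalar_spanmx.
Proof. by split=> [|w w']; apply: val_inj; rewrite /= ?scalar_mxM. Qed.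
HB.instance Definition _ :=
  GRing.isZmodMorphism.Build W spanmx scalar_spanmx scalar_spanmx_zmod.
HB.instance Definition _ :=
  GRing.isMonoidMorphism.Build W spanmx scalar_spanmx scalar_spanmx_monoid.

Lemma reg_spanmx_zmod : zmod_morphism reg_spanmx.
Proof. by move=> b c; apply: val_inj; rewrite /= rmorphB. Qed.
Lemma reg_spanmx_monoid : monoid_morphism reg_spanmx.
Proof. by split=> [|b c]; apply: val_inj; rewrite /= ?rmorph1 ?rmorphM. Qed.
HB.instance Definition _ :=
  GRing.isZmodMorphism.Build B spanmx reg_spanmx reg_spanmx_zmod.
HB.instance Definition _ :=
  GRing.isMonoidMorphism.Build B spanmx reg_spanmx reg_spanmx_monoid.

Lemma basis_tensor_inj (T : comPzRingType)
    (iW : {rmorphism W -> T}) (iB : {rmorphism B -> T}) :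
  (0 < n)%N -> is_tensor alpha iW iB -> injective iW.
Proof.
move=> n_gt0 [_ univ]; apply: raddf_inj => w iWw0.
have compat a : scalar_spanmx (alpha a) = reg_spanmx a%:A.
  by apply: val_inj; rewrite /= lregWZ rmorph1 scalemx1.
have [[h [h_iW _]] _] := univ _ _ _ compat.
have /matrixP/(_ (Ordinal n_gt0) (Ordinal n_gt0)) : val (scalar_spanmx w) = 0.
  by rewrite -h_iW iWw0 rmorph0.
by rewrite !mxE eqxx mulr1n.
Qed.

End RegularRepresentation.

Lemma fin_free_tensor_inj (A : comNzRingType) (B : comAlgType A) (W T : comPzRingType)
    (alpha : {rmorphism A -> W}) (iW : {rmorphism W -> T}) (iB : {rmorphism B -> T}) :
  fin_free B -> is_tensor alpha iW iB -> injective iW.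
Proof.
move=> [n [e basis]]; have [c0 [oneE _]] := basis 1.
have n_gt0 : (0 < n)%N.
  by case: n e basis c0 oneE => // e _ c0; rewrite big_ord0 => /eqP; rewrite oner_eq0.
have coordP x : exists c : {ffun 'I_n -> A}, x == \sum_i c i *: e i.
  have [c [xE _]] := basis x; exists (finfun c).
  by rewrite {1}xE; apply/eqP/eq_bigr => i _; rewrite ffunE.
pose coord x := xchoose (coordP x).
have coordE x : x = \sum_i coord x i *: e i by apply/eqP/(xchooseP (coordP x)).
have coord_unique x c : x = \sum_i c i *: e i -> c =1 coord x.
  have [c' [_ c'_uniq]] := basis x; move=> xE i.
  by rewrite (c'_uniq c xE) (c'_uniq _ (coordE x)).
exact: (basis_tensor_inj coordE coord_unique).
Qed.

Section WeilLift.
Variables (A : comNzRingType) (B : comAlgType A) (D : comPzRingType).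
Variables (phi : {rmorphism B -> D}) (W : comPzRingType) (alpha : {rmorphism A -> W}).
Variables (T : comPzRingType) (iW : {rmorphism W -> T}) (iB : {rmorphism B -> T}).
Variable WD : {rmorphism D -> T}.
Hypothesis descentW : is_weil_descent phi alpha iW iB WD.

Local Notation lifts p q := (weil_lift phi alpha iW iB WD p q).

Lemma dlift_descends (s : derivation W) (sigma : derivation T) :
    (forall a, s (alpha a) = 0) -> (forall w, sigma (iW w) = iW (s w)) ->
    (forall b, sigma (iB b) = 0) -> (forall x, sigma (WD x) = 0) ->
  forall h : {rmorphism T -> dualnum T},
    (forall w, h (iW w) = dmap iW (dlift s w)) -> (forall b, h (iB b) = (dconst \o iB) b) ->
  forall x, h (WD x) = (dconst \o WD) x.
Proof.
move=> s_alpha sigma_iW sigma_iB sigma_WD h hW hB x.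
have [tensorT _] := descentW.
by rewrite (tensor_dlift tensorT s_alpha sigma_iW sigma_iB hW hB) /dlift sigma_WD.
Qed.

Lemma weil_descent_der_eq0 (r : W -> W) (rho : T -> T) :
    is_der r -> is_der rho -> (forall a, r (alpha a) = 0) ->
    (forall w, rho (iW w) = iW (r w)) -> (forall b, rho (iB b) = 0) ->
    (forall x, rho (WD x) = 0) ->
  forall w, r w = 0.
Proof.
move=> rder rhoder r_alpha rho_iW rho_iB rho_WD w.
have [tensorT [WD_phi univ]] := descentW.
have WD_phi' b : (dconst \o WD) (phi b) = (dconst \o iB) b by rewrite /= WD_phi.
have [_ lift_uniq] := univ _ _ _ _ _ (tensor_dualnum tensorT) _ WD_phi'.
have dlift_alpha (s : derivation W) :
    (forall a, s (alpha a) = 0) -> forall a, dlift s (alpha a) = (dconst \o alpha) a.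
  by move=> s_alpha a; rewrite /dlift s_alpha.
pose r' := Derivation rder; pose zW := Derivation (@is_der_zero W).
pose zT := Derivation (@is_der_zero T).
have zT_iW v : zT (iW v) = iW (zW v) by rewrite rmorph0.
(* [dlift r'] and [dlift zW] are two A-algebra maps W -> W[eps] inducing the
   same map D -> T[eps], so they coincide. *)
have := lift_uniq (dlift r') (dlift zW) (dlift_alpha r' r_alpha) (dlift_alpha zW (fun=> erefl))
  (@dlift_descends r' (Derivation rhoder) r_alpha rho_iW rho_iB rho_WD)
  (@dlift_descends zW zT (fun=> erefl) zT_iW (fun=> erefl) (fun=> erefl)) w.
by move/(congr1 snd).
Qed.

Lemma weil_lift_in_DerB p q : lifts p q -> in_DerB phi p.
Proof. by move=> [_ [d [delta [tower _ _]]]]; split; [case: tower | exists d, delta]. Qed.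

Lemma weil_lift_lcomb a1 a2 p1 p2 q1 q2 :
    lifts p1 q1 -> lifts p2 q2 ->
  lifts (lcomb (fun a => phi a%:A) a1 a2 p1 p2) (lcomb alpha a1 a2 q1 q2).
Proof.
move=> [q1D [d1 [de1 [[d1D de1D p1D de1_alg p1_phi] q1_alpha [e1 [[e1D e1_iW e1_iB] WD_p1]]]]]].
move=> [q2D [d2 [de2 [[d2D de2D p2D de2_alg p2_phi] q2_alpha [e2 [[e2D e2_iW e2_iB] WD_p2]]]]]].
have [[iW_alpha _] [WD_phi _]] := descentW.
split; first exact: is_der_lcomb.
exists (fun a => a1 * d1 a + a2 * d2 a), (fun b => a1%:A * de1 b + a2%:A * de2 b); split.
- split; try exact: is_der_lcomb.
    by move=> a; rewrite de1_alg de2_alg !mulr_algl !scalerA -scalerDl.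
  by move=> b; rewrite /lcomb p1_phi p2_phi rmorphD !rmorphM.
- by move=> a; rewrite /lcomb q1_alpha q2_alpha rmorphD !rmorphM.
exists (fun t => iW (alpha a1) * e1 t + iW (alpha a2) * e2 t); split.
  split; first exact: is_der_lcomb.
    by move=> w; rewrite e1_iW e2_iW /lcomb rmorphD !rmorphM.
  by move=> b; rewrite e1_iB e2_iB rmorphD !rmorphM !iW_alpha.
by move=> x; rewrite /lcomb rmorphD !rmorphM -WD_p1 -WD_p2 !WD_phi !iW_alpha.
Qed.

Lemma weil_lift_lie p1 p2 q1 q2 :
  lifts p1 q1 -> lifts p2 q2 -> lifts (lie p1 p2) (lie q1 q2).
Proof.
move=> [q1D [d1 [de1 [[d1D de1D p1D de1_alg p1_phi] q1_alpha [e1 [[e1D e1_iW e1_iB] WD_p1]]]]]].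
move=> [q2D [d2 [de2 [[d2D de2D p2D de2_alg p2_phi] q2_alpha [e2 [[e2D e2_iW e2_iB] WD_p2]]]]]].
split; first exact: is_der_lie.
exists (lie d1 d2), (lie de1 de2); split.
- split; try exact: is_der_lie.
    by move=> a; rewrite /lie de2_alg de1_alg de1_alg de2_alg scalerBl.
  by move=> b; rewrite /lie p2_phi p1_phi p1_phi p2_phi rmorphB.
- by move=> a; rewrite /lie q2_alpha q1_alpha q1_alpha q2_alpha rmorphB.
exists (lie e1 e2); split.
  split; first exact: is_der_lie.
    by move=> w; rewrite /lie e2_iW e1_iW e1_iW e2_iW rmorphB.
  by move=> b; rewrite /lie e2_iB e1_iB e1_iB e2_iB rmorphB.
by move=> x; rewrite /lie rmorphB -WD_p1 -WD_p2 -WD_p1 -WD_p2.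
Qed.

Lemma weil_lift_zero p : (forall x, p x = 0) -> lifts p (fun _ => 0).
Proof.
move=> p0; have pder : is_der p by split=> *; rewrite !p0 ?mulr0 ?mul0r addr0.
split; first exact: is_der_zero.
exists (fun _ => 0), (fun _ => 0); split.
- split; rewrite ?p0 ?scale0r ?rmorph0 //; exact: is_der_zero.
- by move=> a; rewrite rmorph0.
exists (fun _ => 0); split; last by move=> x; rewrite p0 rmorph0.
by split=> [|w|b]; rewrite ?rmorph0 //; exact: is_der_zero.
Qed.

Lemma weil_lift_unique p qa qb :
  fin_free B -> lifts p qa -> lifts p qb -> qa =1 qb.
Proof.
move=> freeB [qaD [da [dela [[_ _ _ dela_alg p_dela] qa_alpha [ea [[eaD ea_iW ea_iB] WD_ea]]]]]].
move=> [qbD [db [delb [[_ _ _ delb_alg p_delb] qb_alpha [eb [[ebD eb_iW eb_iB] WD_eb]]]]]].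
have [tensorT [WD_phi _]] := descentW.
have same_delta b : iB (dela b) = iB (delb b) by rewrite -!WD_phi -p_dela -p_delb.
have same_d a : alpha (da a) = alpha (db a).
  apply: (fin_free_tensor_inj freeB tensorT).
  by rewrite !(proj1 tensorT) -dela_alg -delb_alg same_delta.
move=> w; apply/eqP; rewrite -subr_eq0; apply/eqP; move: w.
apply: (weil_descent_der_eq0 (is_derB qaD qbD) (is_derB eaD ebD)) => [a|w|b|x].
- by rewrite qa_alpha qb_alpha same_d subrr.
- by rewrite ea_iW eb_iW rmorphB.
- by rewrite ea_iB eb_iB same_delta subrr.
- by rewrite -WD_ea -WD_eb subrr.
Qed.

End WeilLift.

Theorem theorem3p3 (A : comNzRingType) (B : comAlgType A)
  (D : comPzRingType) (phi : {rmorphism B -> D})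
  (W : comPzRingType) (alpha : {rmorphism A -> W})
  (T : comPzRingType) (iW : {rmorphism W -> T}) (iB : {rmorphism B -> T})
  (WD : {rmorphism D -> T}) :
  fin_free B ->
  is_weil_descent phi alpha iW iB WD ->
  forall (p1 p2 : D -> D) (q1 q2 : W -> W),
    in_DerB phi p1 -> in_DerB phi p2 ->
    weil_lift phi alpha iW iB WD p1 q1 ->
    weil_lift phi alpha iW iB WD p2 q2 ->
    (forall a1 a2 : A,
       let p := lcomb (fun a => phi (a%:A)) a1 a2 p1 p2 in
       let q := lcomb alpha a1 a2 q1 q2 in
       [/\ in_DerB phi p, weil_lift phi alpha iW iB WD p q &
           forall q' : W -> W, weil_lift phi alpha iW iB WD p q' -> q' =1 q]) /\
    [/\ in_DerB phi (lie p1 p2),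
        weil_lift phi alpha iW iB WD (lie p1 p2) (lie q1 q2) &
        forall q' : W -> W, weil_lift phi alpha iW iB WD (lie p1 p2) q' -> q' =1 lie q1 q2] /\
    ((forall x, p1 (p2 x) = p2 (p1 x)) -> forall w, q1 (q2 w) = q2 (q1 w)).
Proof.
move=> freeB descentW p1 p2 q1 q2 _ _ lift1 lift2.
have lift_uniq := weil_lift_unique descentW freeB.
have lift12 := weil_lift_lie lift1 lift2.
split; [|split].
- move=> a1 a2 p q; have lift := weil_lift_lcomb descentW a1 a2 lift1 lift2.
  by split=> // [|q' lift']; [exact: weil_lift_in_DerB lift | exact: lift_uniq lift' lift].
- by split=> // [|q' lift']; [exact: weil_lift_in_DerB lift12 | exact: lift_uniq lift' lift12].
move=> p12C w; apply/eqP; rewrite -subr_eq0; apply/eqP.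
have lift0 : weil_lift phi alpha iW iB WD (lie p1 p2) (fun _ => 0).
  by apply: weil_lift_zero => x; rewrite /lie p12C subrr.
exact: lift_uniq lift12 lift0 w.
Qed.
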